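(* Let $\mu,\delta,\rho>0$ and $0<\beta_0<\mu$. For a parameter $b>0$ consider the system \[ \dot P=P\big[(b-\mu)-2bP+(\delta-b)A\big],\qquad \dot A=-(2\delta P+\rho)A \] on $\mathcal F=\{(P,A): P\ge0,\ A\ge0,\ 2P+A\le1\}$, with centrist share $C=1-2P-A$. Let $t_1<\dots<t_n$ be shock times with state components $\Delta_1,\dots,\Delta_n\in[0,1]$ and structural components $\Delta\beta_1,\dots,\Delta\beta_n\ge0$; at $t_k$ the state jumps by $P\mapsto P$, $C\mapsto(1-\Delta_k)C$, $A\mapsto A+\Delta_kC$, and the parameter becomes $B_k=\beta_0+\sum_{j=1}^k\Delta\beta_j$. Assume $P(t_k^+)>0$ for every $k$. Let $C_k^\infty$ denote $\lim_{t\to\infty}C(t)$ for the solution of the system with $b=B_k$ started from the post-shock state at $t_k^+$ (i.e. without further shocks), and let $k^*$ be the first index with $B_{k^*}>\mu$. Then: (i) For all $k<k^*$, $C_k^\infty=1$. If in addition $\delta>B_k$, then the near-centrist surge criterion for the $k$-th shock is $\Delta_k>\Delta_c^{(k)}:=\frac{\mu-B_k}{\delta-B_k}$, in the sense that $\lim_{\varepsilon\to0^+}(\dot P/P)$ at $(P,A)=(\varepsilon,\Delta_k)$ under $b=B_k$ is positive if and only if $\Delta_k>\Delta_c^{(k)}$. (ii) $C_{k^*}^\infty=\mu/B_{k^*}<1$. (iii) For every $k>k^*$, $C_k^\infty=\mu/B_k\le C_{k-1}^\infty$, with strict inequality if and only if $\Delta\beta_k>0$. (iv) $k^*=\min\{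k:\sum_{j=1}^k\Delta\beta_j>\mu-\beta_0\}$.
   Context: Symmetric reduction ($L=R=P$) of a four-group voter model with disengaged share $A$; $b$ is the combined recruitment/reactive-polarisation rate. *)

From Stdlib Require Import Reals Lra.
From Coquelicot Require Import Coquelicot.
Open Scope R_scope.

Definition fP (mu delta b P A : R) : R :=
  P * ((b - mu) - 2 * b * P + (delta - b) * A).
Definition fA (delta rho P A : R) : R :=
  - (2 * delta * P + rho) * A.

Definition Cshare (P A : R) : R := 1 - 2 * P - A.

Definition inF (P A : R) : Prop := 0 <= P /\ 0 <= A /\ 2 * P + A <= 1.

Fixpoint cumsum (Db : nat -> R) (k : nat) : R :=
  match k with
  | O => 0
  | S k' => cumsum Db k' + Db (S k')
  end.

Definition Bpar (beta0 : R) (Db : nat -> R) (k : nat) : R := beta0 + cumsum Db k.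

(* (P, A) solves the system with parameter b on [t0, +oo):
   differentiable with the right derivatives for t > t0, and right-continuous
   at t0 (so that (P t0, A t0) is the initial/post-shock state). *)
Definition solves (mu delta rho b t0 : R) (P A : R -> R) : Prop :=
  (forall t, t0 < t ->
     is_derive P t (fP mu delta b (P t) (A t)) /\
     is_derive A t (fA delta rho (P t) (A t))) /\
  filterlim P (at_right t0) (locally (P t0)) /\
  filterlim A (at_right t0) (locally (A t0)).

From Stdlib Require Import Reals Lra Lia.
From Coquelicot Require Import Coquelicot.
Open Scope R_scope.

(* Between shocks P' = P g(t) with g continuous, so P stays positive, and then
   A' = -(2 delta P + rho) A makes A decay like exp (- rho t).  The reciprocal
   u = 1/P solves the linear equation u' = 2b - a(t) u with
   a(t) = (b - mu) + (delta - b) A(t), which tends to b - mu.  If b <= mu the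
   excess of a over 0 is exponentially small, an integrating factor shows that
   u grows at least linearly, and P -> 0, C -> 1.  If b > mu then u -> 2b/(b - mu),
   so P -> (b - mu)/(2b) and C -> 1 - (b - mu)/b = mu/b. *)

Lemma derive_nonneg_nondecreasing (f df : R -> R) (T : R) :
  (forall t, T <= t -> is_derive f t (df t)) -> (forall t, T <= t -> 0 <= df t) ->
  forall x y, T <= x -> x <= y -> f x <= f y.
Proof.
  intros Hf Hdf x y Hx Hxy.
  destruct (MVT_gen f x y df) as [c [Hc Hmvt]].
  - intros z Hz. apply Hf. rewrite Rmin_left in Hz; lra.
  - intros z Hz. apply continuity_pt_filterlim, (@ex_derive_continuous R_AbsRing R_NormedModule).
    exists (df z). apply Hf. rewrite Rmin_left in Hz; lra.
  - rewrite Rmin_left, Rmax_right in Hc by lra.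
    assert (0 <= df c) by (apply Hdf; lra). nra.
Qed.

Lemma derive_nonpos_nonincreasing (f df : R -> R) (T : R) :
  (forall t, T <= t -> is_derive f t (df t)) -> (forall t, T <= t -> df t <= 0) ->
  forall x y, T <= x -> x <= y -> f y <= f x.
Proof.
  intros Hf Hdf x y Hx Hxy.
  enough (- f x <= - f y) by lra.
  apply (derive_nonneg_nondecreasing (fun s => - f s) (fun s => - df s) T); [| |exact Hx|exact Hxy].
  - intros t Ht. apply (is_derive_opp f t (df t)), Hf, Ht.
  - intros t Ht. specialize (Hdf t Ht). lra.
Qed.

Lemma is_lim_p_infty_of_derive_ge (f df : R -> R) (T c : R) : 0 < c ->
  (forall t, T <= t -> is_derive f t (df t)) -> (forall t, T <= t -> c <= df t) ->
  is_lim f p_infty p_infty.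
Proof.
  intros Hc Hf Hdf.
  assert (Hlin : forall t, T <= t -> f T + c * (t - T) <= f t).
  { intros t Ht.
    enough (f T - c * T <= f t - c * t) by lra.
    apply (derive_nonneg_nondecreasing (fun s => f s - c * s) (fun s => df s - c) T);
      [| |lra|exact Ht].
    - intros s Hs. auto_derive; [exists (df s); auto|].
      erewrite is_derive_unique by (apply Hf; exact Hs). ring.
    - intros s Hs. specialize (Hdf s Hs). lra. }
  apply is_lim_spec. intros M.
  exists (T + Rabs (M - f T) / c). intros t Ht.
  pose proof (Rdiv_le_0_compat _ _ (Rabs_pos (M - f T)) Hc).
  assert (Hgap : Rabs (M - f T) / c < t - T) by lra.
  apply Rlt_div_l in Hgap; [|lra].
  pose proof (Rle_abs (M - f T)).
  specialize (Hlin t ltac:(lra)). nra.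
Qed.

Lemma derive_mul_pos (f g : R -> R) (t0 T : R) : t0 < T ->
  (forall t, t0 < t -> is_derive f t (f t * g t)) ->
  (forall t, t0 < t -> continuous g t) ->
  0 < f T -> forall t, T <= t -> 0 < f t.
Proof.
  intros HT Hf Hg HfT.
  set (G := fun s => RInt g T s).
  assert (HG : forall t, t0 < t -> is_derive G t (g t)).
  { intros t Ht. apply (is_derive_RInt g G T t); [|apply Hg, Ht].
    assert (Hr : 0 < t - t0) by lra.
    exists (mkposreal _ Hr). intros s Hs. change (Rabs (s - t) < t - t0) in Hs.
    apply (@RInt_correct R_CompleteNormedModule), (@ex_RInt_continuous R_CompleteNormedModule).
    intros z Hz. apply Hg.
    assert (t0 < Rmin T s) by (apply Rmin_glb_lt; [lra|apply Rabs_def2 in Hs; lra]).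
    lra. }
  assert (HQ : forall t, T <= t -> f T * exp (- G T) <= f t * exp (- G t)).
  { intros t Ht.
    apply (derive_nonneg_nondecreasing (fun s => f s * exp (- G s)) (fun _ => 0) T);
      [|intros; lra|lra|exact Ht].
    intros s Hs. auto_derive.
    - split; [exists (f s * g s); apply Hf; lra|split; [exists (g s); apply HG; lra|auto]].
    - erewrite is_derive_unique by (apply Hf; lra).
      erewrite is_derive_unique by (apply HG; lra). ring. }
  intros t Ht. specialize (HQ t Ht).
  unfold G in HQ. rewrite RInt_point in HQ. change (zero : R) with 0 in HQ.
  rewrite Ropp_0, exp_0, Rmult_1_r in HQ.
  pose proof (exp_pos (- RInt g T t)).
  destruct (Rlt_or_le 0 (f t)) as [h|h]; [exact h|nra].
Qed.

Lemma derive_exp_decay (f k : R -> R) (T rho : R) :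
  (forall t, T <= t -> is_derive f t (- k t * f t)) -> (forall t, T <= t -> rho <= k t) ->
  forall t, T <= t -> Rabs (f t) <= Rabs (f T) * exp (- rho * (t - T)).
Proof.
  intros Hf Hk t Ht.
  assert (Hmono : f t ^ 2 * exp (2 * rho * t) <= f T ^ 2 * exp (2 * rho * T)).
  { apply (derive_nonpos_nonincreasing (fun s => f s ^ 2 * exp (2 * rho * s))
      (fun s => 2 * (rho - k s) * f s ^ 2 * exp (2 * rho * s)) T); [| |lra|exact Ht].
    - intros s Hs. auto_derive; [exists (- k s * f s); auto|].
      erewrite is_derive_unique by (apply Hf; exact Hs). ring.
    - intros s Hs. specialize (Hk s Hs). pose proof (exp_pos (2 * rho * s)).
      assert (2 * (rho - k s) * f s ^ 2 <= 0) by nra. nra. }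
  assert (Hsplit : exp (2 * rho * T) = exp (2 * rho * t) * exp (- rho * (t - T)) ^ 2).
  { simpl. rewrite Rmult_1_r, <- !exp_plus. f_equal. ring. }
  assert (Hsq : (f t)² <= (Rabs (f T) * exp (- rho * (t - T)))²).
  { rewrite Rsqr_mult, <- Rsqr_abs. unfold Rsqr.
    apply (Rmult_le_reg_r (exp (2 * rho * t))); [apply exp_pos|].
    rewrite Hsplit in Hmono. nra. }
  apply Rsqr_le_abs_0 in Hsq.
  rewrite Rabs_mult, Rabs_Rabsolu, (Rabs_pos_eq (exp _)) in Hsq; [exact Hsq|].
  apply Rlt_le, exp_pos.
Qed.

Lemma exp_le (x y : R) : x <= y -> exp x <= exp y.
Proof.
  intros Hxy. destruct (Rle_lt_or_eq_dec x y Hxy) as [Hlt | ->]; [|lra].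
  now apply Rlt_le, exp_increasing.
Qed.

Lemma is_lim_exp_neg (K rho T : R) : 0 < rho ->
  is_lim (fun t => K * exp (- rho * (t - T))) p_infty 0.
Proof.
  intros Hrho.
  replace (Finite 0) with (Rbar_mult K 0) by (simpl; f_equal; ring).
  apply is_lim_scal_l.
  apply (is_lim_comp exp (fun t => - rho * (t - T)) p_infty 0 m_infty).
  - exact is_lim_exp_m.
  - apply is_lim_spec. intros M. exists (T + Rabs M / rho). intros t Ht.
    assert (Hq : Rabs M / rho < t - T) by lra.
    apply Rlt_div_l in Hq; [|lra].
    pose proof (Rle_abs (- M)). rewrite Rabs_Ropp in *. simpl. nra.
  - exists 0. intros t _. discriminate.
Qed.

Lemma is_lim_of_exp_bound (f : R -> R) (T K rho : R) : 0 < rho ->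
  (forall t, T <= t -> Rabs (f t) <= K * exp (- rho * (t - T))) ->
  is_lim f p_infty 0.
Proof.
  intros Hrho Hf.
  apply (is_lim_le_le_loc (fun t => - (K * exp (- rho * (t - T))))
           (fun t => K * exp (- rho * (t - T)))).
  - exists T. intros t Ht. apply Rabs_le_between, Hf. lra.
  - replace (Finite 0) with (Rbar_opp 0) by (simpl; f_equal; ring).
    now apply is_lim_opp, is_lim_exp_neg.
  - now apply is_lim_exp_neg.
Qed.

Lemma derive_le_gronwall (V dV : R -> R) (T k K : R) : 0 < k ->
  (forall t, T <= t -> is_derive V t (dV t)) ->
  (forall t, T <= t -> dV t <= - k * V t + K) ->
  forall t, T <= t -> V t <= K / k + (V T - K / k) * exp (- k * (t - T)).
Proof.
  intros Hk HV HdV t Ht.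
  assert (Hmono : (V t - K / k) * exp (k * t) <= (V T - K / k) * exp (k * T)).
  { apply (derive_nonpos_nonincreasing (fun s => (V s - K / k) * exp (k * s))
      (fun s => (dV s + k * V s - K) * exp (k * s)) T); [| |lra|exact Ht].
    - intros s Hs. auto_derive; [exists (dV s); auto|].
      erewrite is_derive_unique by (apply HV; exact Hs). field. lra.
    - intros s Hs. specialize (HdV s Hs). pose proof (exp_pos (k * s)). nra. }
  assert (Hsplit : exp (k * T) = exp (k * t) * exp (- k * (t - T)))
    by (rewrite <- exp_plus; f_equal; ring).
  rewrite Hsplit in Hmono. pose proof (exp_pos (k * t)).
  enough (V t - K / k <= (V T - K / k) * exp (- k * (t - T))) by lra.
  apply (Rmult_le_reg_r (exp (k * t))); [lra|]. nra.
Qed.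

Lemma linear_ode_sq_bound (w a r : R -> R) (T al eps : R) : 0 < al ->
  (forall t, T <= t -> is_derive w t (- a t * w t + r t)) ->
  (forall t, T <= t -> al <= a t /\ Rabs (r t) <= al * eps / 2) ->
  forall t, T <= t ->
  w t ^ 2 <= eps ^ 2 / 4 + (w T ^ 2 - eps ^ 2 / 4) * exp (- al * (t - T)).
Proof.
  intros Hal Hw Har t Ht.
  replace (eps ^ 2 / 4) with (al * (eps ^ 2 / 4) / al) by (field; lra).
  apply (derive_le_gronwall (fun s => w s ^ 2) (fun s => 2 * w s * (- a s * w s + r s)) T);
    [exact Hal| | |exact Ht].
  - intros s Hs. auto_derive; [exists (- a s * w s + r s); now apply Hw|].
    erewrite is_derive_unique by (now apply Hw). ring.
  - intros s Hs. destruct (Har s Hs) as [Has Hrs]. apply Rabs_le_between in Hrs.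
    cbv beta. replace (al * (eps ^ 2 / 4) / al) with (eps ^ 2 / 4) by (field; lra).
    apply (Rmult_le_reg_l al); [exact Hal|].
    (* [2 al w r <= al^2 w^2 + r^2] *)
    assert (0 <= (al * w s - r s) ^ 2) by apply pow2_ge_0.
    assert (r s ^ 2 <= (al * eps / 2) ^ 2) by nra.
    assert (0 <= w s ^ 2) by apply pow2_ge_0.
    nra.
Qed.

Lemma linear_ode_is_lim_0 (w a r : R -> R) (T m : R) : 0 < m ->
  is_lim a p_infty m -> is_lim r p_infty 0 ->
  (forall t, T <= t -> is_derive w t (- a t * w t + r t)) ->
  is_lim w p_infty 0.
Proof.
  intros Hm Ha Hr Hw.
  apply is_lim_spec in Ha, Hr. apply is_lim_spec. intros [eps Heps]; simpl.
  assert (Hal : 0 < m / 2) by lra.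
  assert (Heta : 0 < m / 2 * eps / 2) by nra.
  destruct (filter_and _ _ (Ha (mkposreal _ Hal)) (Hr (mkposreal _ Heta))) as [M HM].
  simpl in HM. set (T2 := Rmax T M + 1).
  assert (HT2 : T <= T2 /\ M < T2) by (pose proof (Rmax_l T M); pose proof (Rmax_r T M);
                                       unfold T2; lra).
  assert (HV : forall t, T2 <= t ->
    w t ^ 2 <= eps ^ 2 / 4 + (w T2 ^ 2 - eps ^ 2 / 4) * exp (- (m / 2) * (t - T2))).
  { apply (linear_ode_sq_bound w a r T2 (m / 2) eps Hal).
    - intros t Ht. apply Hw. lra.
    - intros t Ht. destruct (HM t ltac:(lra)) as [Has Hrs].
      rewrite Rminus_0_r in Hrs. apply Rabs_def2 in Has.
      split; [lra|now apply Rlt_le]. }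
  assert (Htail := is_lim_exp_neg (w T2 ^ 2 - eps ^ 2 / 4) (m / 2) T2 Hal).
  apply is_lim_spec in Htail.
  assert (Heps2 : 0 < eps ^ 2 / 2) by nra.
  destruct (Htail (mkposreal _ Heps2)) as [N HN]; simpl in HN.
  exists (Rmax T2 N). intros t Ht.
  pose proof (Rmax_l T2 N). pose proof (Rmax_r T2 N).
  specialize (HV t ltac:(lra)). specialize (HN t ltac:(lra)).
  rewrite Rminus_0_r in HN |- *. apply Rabs_def2 in HN.
  assert (w t ^ 2 < eps ^ 2) by lra.
  apply Rabs_def1; nra.
Qed.

Lemma linear_ode_is_lim_p_infty (u a : R -> R) (T c k rho : R) :
  0 < c -> 0 <= k -> 0 < rho ->
  (forall t, T <= t -> is_derive u t (c - a t * u t)) ->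
  (forall t, T <= t -> 0 < u t) ->
  (forall t, T <= t -> a t <= k * exp (- rho * (t - T))) ->
  is_lim u p_infty p_infty.
Proof.
  intros Hc Hk Hrho Hu Hpos Ha.
  assert (Hkr : 0 <= k / rho) by (apply Rdiv_le_0_compat; lra).
  assert (Hdecay : forall s, T <= s -> 0 < exp (- rho * (s - T)) <= 1).
  { intros s Hs. split; [apply exp_pos|]. rewrite <- exp_0. apply exp_le. nra. }
  assert (Hfactor : forall s, T <= s ->
    exp (- (k / rho)) <= exp (- (k / rho) * exp (- rho * (s - T))) <= 1).
  { intros s Hs. specialize (Hdecay s Hs). rewrite <- exp_0.
    split; apply exp_le; nra. }
  (* [h t = - (k / rho) exp (- rho (t - T))] has [h' >= a], hence [(u exp h)' >= c exp h] *)
  apply (is_lim_le_p_loc (fun t => u t * exp (- (k / rho) * exp (- rho * (t - T))))).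
  - exists T. intros t Ht. specialize (Hfactor t ltac:(lra)). specialize (Hpos t ltac:(lra)).
    nra.
  - apply (is_lim_p_infty_of_derive_ge _
      (fun s => exp (- (k / rho) * exp (- rho * (s - T)))
                * (c + u s * (k * exp (- rho * (s - T)) - a s))) T (c * exp (- (k / rho)))).
    + apply Rmult_lt_0_compat; [exact Hc|apply exp_pos].
    + intros s Hs. auto_derive; [exists (c - a s * u s); now apply Hu|].
      erewrite is_derive_unique by (now apply Hu). unfold Rminus. field. lra.
    + intros s Hs. specialize (Hfactor s Hs). specialize (Ha s Hs).
      specialize (Hpos s Hs).
      set (E := exp (- (k / rho) * exp (- rho * (s - T)))) in *.
      assert (0 <= u s * (k * exp (- rho * (s - T)) - a s)) by nra.
      assert (0 <= E) by (unfold E; apply Rlt_le, exp_pos).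
      nra.
Qed.

Lemma linear_ode_is_lim (u a : R -> R) (T c m : R) : 0 < m ->
  is_lim a p_infty m ->
  (forall t, T <= t -> is_derive u t (c - a t * u t)) ->
  is_lim u p_infty (c / m).
Proof.
  intros Hm Ha Hu.
  apply (is_lim_ext_loc (fun t => (u t - c / m) + c / m)); [exists T; intros; ring|].
  replace (Finite (c / m)) with (Finite (0 + c / m)) by (f_equal; ring).
  apply is_lim_plus'; [|apply is_lim_const].
  apply (linear_ode_is_lim_0 _ a (fun t => c / m * (m - a t)) T m Hm Ha).
  - replace (Finite 0) with (Rbar_mult (c / m) (m - m)) by (simpl; f_equal; ring).
    apply is_lim_scal_l, is_lim_minus'; [apply is_lim_const|exact Ha].
  - intros t Ht. auto_derive; [exists (c - a t * u t); now apply Hu|].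
    erewrite is_derive_unique by (now apply Hu). field. lra.
Qed.

Lemma is_lim_of_inv (f : R -> R) (x l : Rbar) :
  Rbar_locally' x (fun t => f t <> 0) -> is_lim (fun t => / f t) x l -> l <> 0 ->
  is_lim f x (Rbar_inv l).
Proof.
  intros Hf Hl Hl0.
  apply (is_lim_ext_loc (fun t => / / f t)).
  - apply (filter_imp (fun t => f t <> 0)); [intros t _; apply Rinv_inv|exact Hf].
  - now apply is_lim_inv.
Qed.

Section Segment.

Variables (mu delta rho b t0 : R) (P A : R -> R).
Hypotheses (Hdelta : 0 < delta) (Hrho : 0 < rho)
  (Hsol : solves mu delta rho b t0 P A) (HP0 : 0 < P t0).

Lemma solves_P_pos : exists T, t0 < T /\ forall t, T <= t -> 0 < P t.
Proof.
  destruct Hsol as [Hder [HPc _]].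
  destruct (proj1 (filterlim_locally P (P t0)) HPc (mkposreal _ HP0)) as [d Hd].
  exists (t0 + d / 2).
  assert (Hd2 : 0 < d / 2) by (pose proof (cond_pos d); lra).
  split; [lra|].
  apply (derive_mul_pos P (fun s => (b - mu) - 2 * b * P s + (delta - b) * A s) t0); [lra| | |].
  - intros t Ht. exact (proj1 (Hder t Ht)).
  - intros t Ht. apply (@ex_derive_continuous R_AbsRing R_NormedModule).
    auto_derive. repeat split.
    + exists (fP mu delta b (P t) (A t)). apply Hder, Ht.
    + exists (fA delta rho (P t) (A t)). apply Hder, Ht.
  - assert (Hball : Rabs (P (t0 + d / 2) - P t0) < P t0).
    { apply (Hd (t0 + d / 2)); [|lra].
      change (Rabs (t0 + d / 2 - t0) < d). rewrite Rabs_pos_eq; lra. }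
    apply Rabs_def2 in Hball. lra.
Qed.

Lemma solves_A_bound (T : R) : t0 < T -> (forall t, T <= t -> 0 < P t) ->
  forall t, T <= t -> Rabs (A t) <= Rabs (A T) * exp (- rho * (t - T)).
Proof.
  intros HT HPpos.
  apply (derive_exp_decay A (fun s => 2 * delta * P s + rho)).
  - intros t Ht. apply (proj1 Hsol). lra.
  - intros t Ht. specialize (HPpos t Ht). nra.
Qed.

Lemma solves_A_lim : is_lim A p_infty 0.
Proof.
  destruct solves_P_pos as [T [HT HPpos]].
  exact (is_lim_of_exp_bound A T (Rabs (A T)) rho Hrho (solves_A_bound T HT HPpos)).
Qed.

Lemma solves_inv_P_derive (T : R) : t0 < T -> (forall t, T <= t -> 0 < P t) ->
  forall t, T <= t ->
  is_derive (fun s => / P s) t (2 * b - ((b - mu) + (delta - b) * A t) * / P t).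
Proof.
  intros HT HPpos t Ht.
  assert (HP : is_derive P t (fP mu delta b (P t) (A t))) by (apply (proj1 Hsol); lra).
  specialize (HPpos t Ht).
  auto_derive; [split; [exists (fP mu delta b (P t) (A t)); exact HP|lra]|].
  erewrite is_derive_unique by exact HP. unfold fP. field. lra.
Qed.

Lemma solves_Cshare_lim (p : R) :
  is_lim P p_infty p -> is_lim (fun t => Cshare (P t) (A t)) p_infty (1 - 2 * p).
Proof.
  intros HP. unfold Cshare.
  replace (1 - 2 * p) with (1 - 2 * p - 0) by ring.
  apply is_lim_minus'; [|exact solves_A_lim].
  apply is_lim_minus'; [apply is_lim_const|].
  exact (is_lim_scal_l P 2 p_infty p HP).
Qed.

Lemma solves_Cshare_lim_le : 0 < b -> b <= mu ->
  is_lim (fun t => Cshare (P t) (A t)) p_infty 1.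
Proof.
  intros Hb Hbmu.
  destruct solves_P_pos as [T [HT HPpos]].
  assert (Hu : is_lim (fun t => / P t) p_infty p_infty).
  { apply (linear_ode_is_lim_p_infty _ (fun t => (b - mu) + (delta - b) * A t) T (2 * b)
             (Rabs (delta - b) * Rabs (A T)) rho); [lra| | lra | | |].
    - apply Rmult_le_pos; apply Rabs_pos.
    - exact (solves_inv_P_derive T HT HPpos).
    - intros t Ht. apply Rinv_0_lt_compat, HPpos, Ht.
    - intros t Ht.
      pose proof (Rle_abs ((delta - b) * A t)).
      pose proof (solves_A_bound T HT HPpos t Ht).
      rewrite Rabs_mult in *.
      assert (0 <= Rabs (delta - b)) by apply Rabs_pos.
      nra. }
  replace 1 with (1 - 2 * 0) by ring.
  apply solves_Cshare_lim.
  apply (is_lim_of_inv P p_infty p_infty); [|exact Hu|discriminate].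
  exists T. intros t Ht. specialize (HPpos t ltac:(lra)). lra.
Qed.

Lemma solves_Cshare_lim_gt : 0 < mu -> mu < b ->
  is_lim (fun t => Cshare (P t) (A t)) p_infty (mu / b).
Proof.
  intros Hmu Hbmu.
  destruct solves_P_pos as [T [HT HPpos]].
  assert (Hu : is_lim (fun t => / P t) p_infty (2 * b / (b - mu))).
  { apply (linear_ode_is_lim _ (fun t => (b - mu) + (delta - b) * A t) T); [lra| |].
    - replace (Finite (b - mu)) with (Finite ((b - mu) + (delta - b) * 0)) by (f_equal; ring).
      apply is_lim_plus'; [apply is_lim_const|].
      exact (is_lim_scal_l A (delta - b) p_infty 0 solves_A_lim).
    - exact (solves_inv_P_derive T HT HPpos). }
  replace (mu / b) with (1 - 2 * / (2 * b / (b - mu))) by (field; lra).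
  apply solves_Cshare_lim.
  apply (is_lim_of_inv P p_infty (2 * b / (b - mu))); [|exact Hu|].
  - exists T. intros t Ht. specialize (HPpos t ltac:(lra)). lra.
  - intros Heq. injection Heq. apply Rgt_not_eq, Rdiv_lt_0_compat; lra.
Qed.

End Segment.

Lemma surge_criterion (mu delta b D : R) : b < delta ->
  exists L : R,
    filterlim (fun eps => fP mu delta b eps D / eps) (at_right 0) (locally L) /\
    (0 < L <-> (mu - b) / (delta - b) < D).
Proof.
  intros Hbd. exists ((b - mu) + (delta - b) * D). split.
  - apply (filterlim_ext_loc (fun eps => (b - mu) - 2 * b * eps + (delta - b) * D)).
    + exists (mkposreal 1 Rlt_0_1). intros eps _ Heps. unfold fP. field. lra.
    + apply (filterlim_filter_le_1 _ (filter_le_within _)).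
      replace ((b - mu) + (delta - b) * D) with ((b - mu) - 2 * b * 0 + (delta - b) * D) at 1
        by ring.
      change (continuous (fun eps => (b - mu) - 2 * b * eps + (delta - b) * D) 0).
      apply (@ex_derive_continuous R_AbsRing R_NormedModule). auto_derive. exact I.
  - rewrite Rlt_div_l by lra. lra.
Qed.

Lemma Bpar_S (beta0 : R) (Db : nat -> R) (k : nat) :
  Bpar beta0 Db (S k) = Bpar beta0 Db k + Db (S k).
Proof. unfold Bpar. simpl. ring. Qed.

Lemma Bpar_le (beta0 : R) (Db : nat -> R) (n i j : nat) :
  (forall k, (1 <= k <= n)%nat -> 0 <= Db k) -> (i <= j <= n)%nat ->
  Bpar beta0 Db i <= Bpar beta0 Db j.
Proof.
  intros HDb [Hij Hjn]. induction Hij as [|j Hij IH]; [lra|].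
  rewrite Bpar_S. specialize (IH ltac:(lia)). specialize (HDb (S j) ltac:(lia)). lra.
Qed.

Lemma Rdiv_add_denom_cmp (x y d : R) : 0 < x -> 0 < y -> 0 <= d ->
  x / (y + d) <= x / y /\ (x / (y + d) < x / y <-> 0 < d).
Proof.
  intros Hx Hy Hd.
  assert (Hgap : x / y - x / (y + d) = x * d / (y * (y + d))) by (field; lra).
  assert (Hden : 0 < y * (y + d)) by nra.
  split; [|split].
  - enough (0 <= x * d / (y * (y + d))) by lra.
    apply Rdiv_le_0_compat; nra.
  - intros Hlt. destruct (Rle_lt_or_eq_dec 0 d Hd) as [Hpos | <-]; [exact Hpos|].
    rewrite Rmult_0_r, Rdiv_0_l in Hgap. lra.
  - intros Hpos. enough (0 < x * d / (y * (y + d))) by lra.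
    apply Rdiv_lt_0_compat; nra.
Qed.

Theorem theorem7p12
  (mu delta rho beta0 : R) (n : nat)
  (tt Dl Db : nat -> R) (P0 A0 : R) (Ps As : nat -> R -> R)
  (Hmu : 0 < mu) (Hdelta : 0 < delta) (Hrho : 0 < rho)
  (Hbeta0 : 0 < beta0) (Hbeta0mu : beta0 < mu)
  (Htt : forall k, (k < n)%nat -> tt k < tt (S k))
  (HDl : forall k, (1 <= k <= n)%nat -> 0 <= Dl k <= 1)
  (HDb : forall k, (1 <= k <= n)%nat -> 0 <= Db k)
  (HF0 : inF P0 A0)
  (Hinit : Ps 0%nat (tt 0%nat) = P0 /\ As 0%nat (tt 0%nat) = A0)
  (Hsol : forall k, (k <= n)%nat ->
     solves mu delta rho (Bpar beta0 Db k) (tt k) (Ps k) (As k))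
  (Hjump : forall k, (1 <= k <= n)%nat ->
     Ps k (tt k) = Ps (k - 1)%nat (tt k) /\
     As k (tt k) = As (k - 1)%nat (tt k)
                   + Dl k * Cshare (Ps (k - 1)%nat (tt k)) (As (k - 1)%nat (tt k)))
  (Hpos : forall k, (1 <= k <= n)%nat -> 0 < Ps k (tt k)) :
  (* (i) *)
  (forall k, (1 <= k <= n)%nat ->
     (forall j, (1 <= j <= k)%nat -> Bpar beta0 Db j <= mu) ->
     is_lim (fun t => Cshare (Ps k t) (As k t)) p_infty 1 /\
     (Bpar beta0 Db k < delta ->
        exists L : R,
          filterlim (fun eps => fP mu delta (Bpar beta0 Db k) eps (Dl k) / eps)
                    (at_right 0) (locally L) /\
          (0 < L <-> (mu - Bpar beta0 Db k) / (delta - Bpar beta0 Db k) < Dl k))) /\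
  (forall kstar : nat,
     (1 <= kstar <= n)%nat -> mu < Bpar beta0 Db kstar ->
     (forall k, (1 <= k < kstar)%nat -> Bpar beta0 Db k <= mu) ->
     (* (ii) *)
     (is_lim (fun t => Cshare (Ps kstar t) (As kstar t)) p_infty
             (mu / Bpar beta0 Db kstar) /\
      mu / Bpar beta0 Db kstar < 1) /\
     (* (iii) *)
     (forall k, (kstar < k <= n)%nat ->
        is_lim (fun t => Cshare (Ps k t) (As k t)) p_infty (mu / Bpar beta0 Db k) /\
        is_lim (fun t => Cshare (Ps (k - 1)%nat t) (As (k - 1)%nat t)) p_infty
               (mu / Bpar beta0 Db (k - 1)) /\
        mu / Bpar beta0 Db k <= mu / Bpar beta0 Db (k - 1) /\
        (mu / Bpar beta0 Db k < mu / Bpar beta0 Db (k - 1) <-> 0 < Db k)) /\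
     (* (iv) *)
     (mu - beta0 < cumsum Db kstar /\
      forall k, (1 <= k)%nat -> mu - beta0 < cumsum Db k -> (kstar <= k)%nat)).
Proof.
  assert (HB_pos : forall k, (k <= n)%nat -> 0 < Bpar beta0 Db k).
  { intros k Hk. pose proof (Bpar_le beta0 Db n 0 k HDb ltac:(lia)) as H0k.
    unfold Bpar at 1 in H0k. simpl cumsum in H0k. lra. }
  assert (Hlim_gt : forall k, (1 <= k <= n)%nat -> mu < Bpar beta0 Db k ->
            is_lim (fun t => Cshare (Ps k t) (As k t)) p_infty (mu / Bpar beta0 Db k)).
  { intros k Hk HBk.
    exact (solves_Cshare_lim_gt _ _ _ _ _ _ _ Hdelta Hrho (Hsol k ltac:(lia)) (Hpos k Hk) Hmu HBk). }
  split.
  - intros k Hk Hj. split; [|apply surge_criterion].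
    exact (solves_Cshare_lim_le _ _ _ _ _ _ _ Hdelta Hrho (Hsol k ltac:(lia)) (Hpos k Hk)
             (HB_pos k ltac:(lia)) (Hj k ltac:(lia))).
  - intros kstar Hks Hgt Hle. split; [|split].
    + split; [now apply Hlim_gt|]. rewrite Rlt_div_l by (apply HB_pos; lia). lra.
    + intros [|k] Hk; [lia|]. replace (S k - 1)%nat with k by lia.
      pose proof (Bpar_le beta0 Db n kstar k HDb ltac:(lia)).
      pose proof (Bpar_le beta0 Db n k (S k) HDb ltac:(lia)).
      split; [apply Hlim_gt; [lia|lra]|].
      split; [apply Hlim_gt; [lia|lra]|].
      rewrite Bpar_S. apply Rdiv_add_denom_cmp; [lra|lra|apply HDb; lia].
    + unfold Bpar in *. split; [lra|].
      intros k Hk Hcs. destruct (Nat.le_gt_cases kstar k) as [Hge|Hlt]; [exact Hge|].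
      specialize (Hle k ltac:(lia)). lra.
Qed.
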